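(* Let $A$ be a Witt-perfect ring and let $B$ be a $p$-torsion free $A$-algebra. Then $B$ is Witt-perfect if and only if the Frobenius map $x\mapsto x^p$ on $B/pB$ is surjective.
   Context: Fix a prime $p$. For a ring $A$, $\mathbf W_{p^n}(A)$ denotes the ring of $p$-typical Witt vectors of length $n+1$ (as a set $A^{n+1}$), and $\mathbf F:\mathbf W_{p^n}(A)\to\mathbf W_{p^{n-1}}(A)$ the Witt-Frobenius ring homomorphism. $A$ is Witt-perfect if $\mathbf F:\mathbf W_{p^n}(A)\to\mathbf W_{p^{n-1}}(A)$ is surjective for all $n\ge 2$. A ring is $p$-torsion free if $p$ is a nonzero divisor in it. *)

From HB Require Import structures.
From mathcomp Require Import all_boot all_order all_algebra.
Set Implicit Arguments. Unset Strict Implicit. Unset Printing Implicit Defensive.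
Import Order.TTheory GRing.Theory Num.Theory.
Local Open Scope ring_scope.

Inductive zterm : Type :=
  | ZVar of nat
  | ZConst of int
  | ZAdd of zterm & zterm
  | ZMul of zterm & zterm
  | ZOpp of zterm.

Fixpoint zeval (R : comPzRingType) (x : nat -> R) (t : zterm) : R :=
  match t with
  | ZVar i => x i
  | ZConst c => c%:~R
  | ZAdd t1 t2 => zeval x t1 + zeval x t2
  | ZMul t1 t2 => zeval x t1 * zeval x t2
  | ZOpp t1 => - zeval x t1
  end.

Definition ghost (R : comPzRingType) (p k : nat) (x : nat -> R) : R :=
  \sum_(i < k.+1) (p%:R) ^+ i * (x i) ^+ (p ^ (k - i))%N.

(* phi = (phi_0, ..., phi_{n-1}) are the integer polynomials defining the
   Witt-Frobenius  F : W_{p^n} -> W_{p^(n-1)}, characterised (uniquely, as Z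
   is p-torsion free and infinite) by the ghost identities
   w_k(F(X)) = w_{k+1}(X) for k < n, checked on all integer inputs. *)
Definition FrobPolys (p n : nat) (phi : nat -> zterm) : Prop :=
  forall (x : nat -> int) (k : nat), (k < n)%N ->
    ghost p k (fun i => zeval x (phi i)) = ghost p k.+1 x.

(* A Witt vector of length n+1 is a map 'I_n.+1 -> A; extend by 0. *)
Definition wext (A : comPzRingType) (n : nat) (a : 'I_n.+1 -> A) : nat -> A :=
  fun j => if (j < n.+1)%N then a (inord j) else 0.

Definition WittFrob_surj (A : comPzRingType) (p n : nat) : Prop :=
  exists phi : nat -> zterm, FrobPolys p n phi /\
    forall y : 'I_n -> A, exists a : 'I_n.+1 -> A,
      forall i : 'I_n, zeval (wext a) (phi i) = y i.

Definition WittPerfect (A : comPzRingType) (p : nat) : Prop :=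
  forall n : nat, (2 <= n)%N -> WittFrob_surj A p n.

Definition p_torsion_free (B : comPzRingType) (p : nat) : Prop :=
  forall b : B, p%:R * b = 0 -> b = 0.

Definition frob_modp_surj (B : comPzRingType) (p : nat) : Prop :=
  forall b : B, exists c d : B, b = c ^+ p + p%:R * d.

From HB Require Import structures.
From mathcomp Require Import all_boot all_order all_algebra.
From mathcomp Require Import ring mpoly zify.
Set Implicit Arguments. Unset Strict Implicit. Unset Printing Implicit Defensive.
Import GRing.Theory.
Local Open Scope ring_scope.

(** The proof works on the
    ghost side: for p-torsion free B the ghost map is injective, and the
    Witt-Frobenius F : W_{p^(m+1)} -> W_{p^m} becomes the shift
    w_k(F a) = w_(k+1)(a).

    - Ghost components and integer polynomial terms; an integer polynomial
      vanishing on Z^n is zero, so the ghost identities of the Frobenius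
      polynomials hold in every commutative ring ([frobpolys_ghost]).
    - Dwork's lemma for a ring with a lift of Frobenius, applied in polynomial
      rings over Z, shows that ghost sequences are closed under +, *, -
      ([is_ghostD], [is_ghostM], [is_ghostN]).
    - The ghost sequences of F-images form a subring containing the
      Teichmueller images [b^p], p times any ghost sequence (F V = p), and,
      when A is Witt-perfect, the unit vectors V^j[1].  If Frobenius is
      surjective mod p, a ghost sequence is reached from these by successive
      approximation ([frob_image_all]), which gives surjectivity of F
      ([witt_frob_surj]).  Conversely w_0(F a) = a_0^p + p a_1.
    - The main theorem treats the zero ring separately and otherwise combines
      the above with the unit vectors pushed from W(A) to W(B). *)

Lemma ghost_ext (R : comPzRingType) p k (x y : nat -> R) :
  (forall i, (i <= k)%N -> x i = y i) -> ghost p k x = ghost p k y.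
Proof. by move=> exy; apply: eq_bigr => i _; rewrite exy // -ltnS. Qed.

Lemma ghost_rmorph (R S : comPzRingType) (g : {rmorphism R -> S}) p k
    (x : nat -> R) :
  g (ghost p k x) = ghost p k (g \o x).
Proof.
rewrite rmorph_sum; apply: eq_bigr => i _.
by rewrite rmorphM rmorphXn rmorph_nat rmorphXn.
Qed.

Lemma ghost0 (R : comPzRingType) p (x : nat -> R) : ghost p 0 x = x 0%N.
Proof. by rewrite /ghost big_ord1 expr0 mul1r expn0 expr1. Qed.

Lemma ghostS (R : comPzRingType) p k (x : nat -> R) :
  ghost p k.+1 x = \sum_(i < k.+1) (p%:R) ^+ i * (x i) ^+ (p ^ (k.+1 - i))
                   + (p%:R) ^+ k.+1 * x k.+1.
Proof. by rewrite /ghost big_ord_recr /= subnn expn0 expr1. Qed.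

Lemma ghost_zero (R : comPzRingType) p k : (0 < p)%N ->
  ghost p k (fun _ => 0 : R) = 0.
Proof.
by move=> p_gt0; rewrite /ghost big1 // => i _; rewrite expr0n expn_eq0 gtn_eqF ?mulr0.
Qed.

(* Ghost components of V^j[c], the Witt vector with [c] in position [j]:
   0 below [j] and p^j c^(p^(k-j)) from [j] on.  For [j = 0] these are the
   ghost components c^(p^k) of the Teichmueller vector [c]. *)
Definition ghostV (R : comPzRingType) p j (c : R) : nat -> R :=
  fun k => if (k < j)%N then 0 else (p%:R) ^+ j * c ^+ (p ^ (k - j)).

Lemma ghost_single (R : comPzRingType) p k j (c : R) : (0 < p)%N ->
  ghost p k (fun i => if i == j then c else 0) = ghostV p j c k.
Proof.
move=> p_gt0; rewrite /ghost /ghostV.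
rewrite (eq_bigr (fun i : 'I_k.+1 => if i == j :> nat
    then (p%:R : R) ^+ i * c ^+ (p ^ (k - i)) else 0)); last first.
  by move=> i _; case: eqP => // _; rewrite expr0n expn_eq0 gtn_eqF ?mulr0.
rewrite -big_mkcond; case: ltnP => [lt_kj|le_jk].
  rewrite big_pred0 // => i /=; apply/negbTE; rewrite neq_ltn.
  by rewrite (leq_ltn_trans _ lt_kj) // -ltnS ltn_ord.
by rewrite (big_pred1 (Ordinal (le_jk : (j < k.+1)%N))).
Qed.

Fixpoint zterm_bound (t : zterm) : nat :=
  match t with
  | ZVar i => i.+1
  | ZConst _ => 0%N
  | ZAdd t1 t2 | ZMul t1 t2 => maxn (zterm_bound t1) (zterm_bound t2)
  | ZOpp t1 => zterm_bound t1
  end.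

Lemma zeval_ext (R : comPzRingType) (x y : nat -> R) t :
  (forall i, (i < zterm_bound t)%N -> x i = y i) -> zeval x t = zeval y t.
Proof.
elim: t => [i|c|t1 IH1 t2 IH2|t1 IH1 t2 IH2|t1 IH1] /= exy; rewrite ?exy //;
  by rewrite ?IH1 ?IH2 // => i lti; apply: exy; rewrite leq_max lti ?orbT.
Qed.

Lemma zeval_rmorph (R S : comPzRingType) (g : {rmorphism R -> S})
    (x : nat -> R) t :
  g (zeval x t) = zeval (g \o x) t.
Proof.
elim: t => [i|c|t1 IH1 t2 IH2|t1 IH1 t2 IH2|t1 IH1] //=.
- by rewrite rmorph_int.
- by rewrite rmorphD IH1 IH2.
- by rewrite rmorphM IH1 IH2.
- by rewrite rmorphN IH1.
Qed.

(** Polynomial identities: an integer polynomial vanishing at every integer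
    point is zero.  This is what lets the ghost identities defining
    [FrobPolys], which are only required on integer inputs, hold in every
    commutative ring. *)

Lemma mpoly_rmorph_ext n (S : comNzRingType)
    (g1 g2 : {rmorphism {mpoly int[n]} -> S}) :
  (forall i, g1 'X_i = g2 'X_i) -> g1 =1 g2.
Proof.
move=> eqX q; elim/mpolyind: q => [|c m q _ _ IH]; first by rewrite !rmorph0.
rewrite !rmorphD IH; congr (_ + _).
rewrite -mul_mpolyC !rmorphM mpolyXE_id !rmorph_prod -[c in c%:MP]intz.
rewrite rmorph_int !rmorph_int; congr (_ * _).
by apply: eq_bigr => i _; rewrite !rmorphXn eqX.
Qed.

Lemma poly_int_eq0 (P : {poly int}) : (forall t : int, P.[t] = 0) -> P = 0.
Proof.
move=> P0; apply: (@roots_geq_poly_eq0 _ P [seq i%:Z | i <- iota 0 (size P)]).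
- by apply/allP => t _; apply/rootP.
- by rewrite map_inj_uniq ?iota_uniq // => a b [].
- by rewrite size_map size_iota.
Qed.

Lemma muniX_widen n (j : 'I_n) :
  muni ('X_(widen_ord (leqnSn n) j) : {mpoly int[n.+1]}) = ('X_j)%:P.
Proof.
rewrite /muni mmapX mmap1U /=; case: splitP => k /= eq_jk.
  by congr (('X__)%:P); apply: val_inj.
by have := ltn_ord j; rewrite eq_jk ltnNge leq_addr.
Qed.

Lemma muniX_max n : muni ('X_ord_max : {mpoly int[n.+1]}) = 'X.
Proof.
rewrite /muni mmapX mmap1U /=; case: splitP => k /= eq_nk //.
by have := ltn_ord k; rewrite -eq_nk ltnn.
Qed.

Lemma ord_split n (i : 'I_n.+1) :
  (exists j : 'I_n, i = widen_ord (leqnSn n) j) \/ i = ord_max.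
Proof.
case: (ltnP i n) => lt_in; [left; exists (Ordinal lt_in) | right].
  exact: val_inj.
by apply: val_inj; apply/eqP; rewrite eqn_leq lt_in -ltnS ltn_ord.
Qed.

Definition ord_extend n (v : 'I_n -> int) (t : int) : 'I_n.+1 -> int :=
  fun i => if insub (val i) is Some j then v j else t.

Lemma mpoly_int_eq0 n (Q : {mpoly int[n]}) :
  (forall v : 'I_n -> int, Q.@[v] = 0) -> Q = 0.
Proof.
elim: n Q => [|n IH] Q Q0.
  have := @mpoly_rmorph_ext 0 _ idfun (@mpolyC 0 int \o meval (fun _ => 0)).
  by move=> /(_ _ Q) /= ->; [rewrite Q0 | case].
(* Q, as a polynomial in the last variable, has all its coefficients zero. *)
have eval_muni v t : (map_poly (meval v) (muni Q)).[t] = Q.@[ord_extend v t].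
  have E : horner_eval t \o map_poly (meval v) \o @muni n int
           =1 meval (ord_extend v t).
    apply: mpoly_rmorph_ext => i; case: (ord_split i) => [[j ->]|->] /=.
    - rewrite muniX_widen map_polyC /horner_eval /= hornerC /= !mevalXU.
      by rewrite /ord_extend insubT //= => lt_jn; congr v; apply: val_inj.
    - rewrite muniX_max map_polyX /horner_eval /= hornerX mevalXU /ord_extend.
      by rewrite insubF //= ltnn.
  exact: E Q.
have muniQ0 : muni Q = 0.
  apply/polyP => k; rewrite coef0; apply: IH => v.
  have := poly_int_eq0 (fun t => etrans (eval_muni v t) (Q0 _)).
  by move/(congr1 (fun P : {poly int} => P`_k)); rewrite coef_map coef0.
have E : horner_eval ('X_ord_max : {mpoly int[n.+1]})
         \o map_poly (@mwiden n int) \o @muni n int =1 idfun.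
  apply: mpoly_rmorph_ext => i; case: (ord_split i) => [[j ->]|->] /=.
  - rewrite muniX_widen map_polyC /horner_eval /= hornerC /= mwidenX mnmwiden1.
    by congr 'X__; apply: val_inj.
  - by rewrite muniX_max map_polyX /horner_eval /= hornerX.
by rewrite -[Q]E /= muniQ0 rmorph0 /horner_eval /= horner0.
Qed.

(* The ghost identities w_k(phi(x)) = w_(k+1)(x) hold over any (nonzero)
   commutative ring: their difference is an integer polynomial in finitely
   many variables vanishing on all integer points. *)
Lemma frobpolys_ghost (S : comNzRingType) p n phi : FrobPolys p n phi ->
  forall (a : nat -> S) k, (k < n)%N ->
  ghost p k (fun i => zeval a (phi i)) = ghost p k.+1 a.
Proof.
move=> phiF a k lt_kn.
pose N := maxn n.+2 (\max_(i < n) zterm_bound (phi i)).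
pose X (j : nat) : {mpoly int[N]} := if insub j is Some o then 'X_o else 0.
pose ev : {rmorphism {mpoly int[N]} -> S} := mmap intr (fun o : 'I_N => a o).
have evX j : (j < N)%N -> ev (X j) = a j.
  by move=> ltjN; rewrite /ev /X insubT /= mmapX mmap1U.
(* The identity holds at the generic point X of Z[X_0..X_(N-1)] ... *)
have Q0 : ghost p k (fun i => zeval X (phi i)) - ghost p k.+1 X = 0.
  apply: mpoly_int_eq0 => v; rewrite rmorphB !ghost_rmorph.
  rewrite -(phiF (meval v \o X) k lt_kn); apply/eqP; rewrite subr_eq0.
  by apply/eqP/ghost_ext => i _ /=; rewrite zeval_rmorph.
(* ... hence at a, its image under X_i |-> a_i. *)
move/(congr1 ev)/eqP: Q0; rewrite rmorphB rmorph0 subr_eq0 !ghost_rmorph => /eqP.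
have ltnN : (n.+2 <= N)%N by rewrite leq_max leqnn.
rewrite [RHS](@ghost_ext _ p k.+1 _ a) => [<-|i le_ik]; last first.
  by rewrite /= evX //; lia.
apply: ghost_ext => i le_ik /=; rewrite zeval_rmorph; apply: zeval_ext => j ltj /=.
rewrite evX // (leq_trans ltj) // leq_max; apply/orP; right.
have lt_in : (i < n)%N by exact: leq_ltn_trans le_ik lt_kn.
exact: (@leq_bigmax _ (fun o : 'I_n => zterm_bound (phi o)) (Ordinal lt_in)).
Qed.

Definition divides (R : comPzRingType) (d x : R) : Prop := exists e, x = d * e.

Section Divides.
Variable R : comPzRingType.
Implicit Types d x y : R.

Lemma divides0 d : divides d 0. Proof. by exists 0; rewrite mulr0. Qed.

Lemma divides_mulr d y : divides d (d * y). Proof. by exists y. Qed.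

Lemma dividesD d x y : divides d x -> divides d y -> divides d (x + y).
Proof. by move=> [e ->] [f ->]; exists (e + f); rewrite mulrDr. Qed.

Lemma dividesN d x : divides d x -> divides d (- x).
Proof. by move=> [e ->]; exists (- e); rewrite mulrN. Qed.

Lemma dividesB d x y : divides d x -> divides d y -> divides d (x - y).
Proof. by move=> dx dy; apply/dividesD/dividesN. Qed.

Lemma dividesMr d x y : divides d x -> divides d (x * y).
Proof. by move=> [e ->]; exists (e * y); rewrite mulrA. Qed.

Lemma dividesMl d x y : divides d x -> divides d (y * x).
Proof. by rewrite mulrC; apply: dividesMr. Qed.

Lemma dividesMM d1 d2 x y :
  divides d1 x -> divides d2 y -> divides (d1 * d2) (x * y).
Proof. by move=> [e ->] [f ->]; exists (e * f); rewrite mulrACA. Qed.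

Lemma divides_mull d c x : divides (d * c) x -> divides d x.
Proof. by move=> [e ->]; exists (c * e); rewrite mulrA. Qed.

Lemma divides_sum d m (F : 'I_m -> R) :
  (forall i, divides d (F i)) -> divides d (\sum_(i < m) F i).
Proof. by move=> dF; apply: big_ind => //; [exact: divides0 | exact: dividesD]. Qed.

Lemma divides_subX d x y i : divides d (x - y) -> divides d (x ^+ i - y ^+ i).
Proof. by rewrite subrXX; apply: dividesMr. Qed.
End Divides.

Section PowerCongruences.
Variables (R : comPzRingType) (p : nat).
Local Notation P := (p%:R : R).

Lemma divides_expp j (a b : R) : (0 < j)%N -> (0 < p)%N ->
  divides (P ^+ j) (a - b) -> divides (P ^+ j.+1) (a ^+ p - b ^+ p).
Proof.
move=> j_gt0 p_gt0 dab; rewrite subrXX exprSr; apply: dividesMM => //.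
have dPab : divides P (a - b).
  by move: dab; case: j j_gt0 => // j _; rewrite exprS => /divides_mull.
(* Modulo p each term a^(p-1-i) b^i equals b^(p-1), and there are p terms. *)
have -> : \sum_(i < p) a ^+ (p.-1 - i) * b ^+ i =
   \sum_(i < p) (a ^+ (p.-1 - i) - b ^+ (p.-1 - i)) * b ^+ i + P * b ^+ p.-1.
  have -> : P * b ^+ p.-1 = \sum_(i < p) b ^+ p.-1.
    by rewrite sumr_const card_ord mulr_natl.
  rewrite -big_split /=.
  apply: eq_bigr => i _; rewrite mulrBl -exprD subnK ?subrK //.
  by rewrite -ltnS prednK.
apply/dividesD/divides_mulr/divides_sum => i.
exact/dividesMr/divides_subX.
Qed.

Lemma divides_exppn j r (a b : R) : (0 < j)%N -> (0 < p)%N ->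
  divides (P ^+ j) (a - b) ->
  divides (P ^+ (j + r)) (a ^+ (p ^ r) - b ^+ (p ^ r)).
Proof.
move=> j_gt0 p_gt0 dab; elim: r => [|r IH]; first by rewrite addn0 expn0 !expr1.
by rewrite addnS expnSr !exprM; apply: divides_expp; rewrite ?addn_gt0 ?j_gt0.
Qed.

(* (x + y)^p = x^p + y^p mod p, as p divides the inner binomial coefficients. *)
Lemma divides_p_expD (x y : R) : prime p ->
  divides P ((x + y) ^+ p - x ^+ p - y ^+ p).
Proof.
move=> p_pr; have [q def_p] : exists q, p = q.+1.
  by exists p.-1; rewrite prednK ?prime_gt0.
rewrite {2 3 4}def_p exprDn big_ord_recl big_ord_recr /= subn0 subnn bin0 binn.
rewrite !mulr1n expr0 mul1r mulr1.
have -> : forall u v w : R, u + (v + w) - u - w = v by move=> u v w; ring.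
apply: divides_sum => i; have lt_iq := ltn_ord i.
have /dvdnP[c ->] : (p %| 'C(q.+1, i.+1))%N by rewrite -def_p prime_dvd_bin // def_p ltnS.
by exists ((x ^+ (q.+1 - bump 0 i) * y ^+ bump 0 i) *+ c); rewrite mulrnA mulr_natl.
Qed.
End PowerCongruences.

Lemma fermat_int p (c : int) : prime p -> divides (p%:R : int) (c ^+ p - c).
Proof.
move=> p_pr; have p_gt0 := prime_gt0 p_pr.
have fermat_nat (k : nat) : divides (p%:R : int) (k%:Z ^+ p - k%:Z).
  elim: k => [|k IH]; first by rewrite expr0n gtn_eqF // subr0; apply: divides0.
  have := divides_p_expD (k%:Z) 1 p_pr; rewrite expr1n => dk.
  have -> : (k.+1)%:Z = k%:Z + 1 by rewrite -addn1 PoszD.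
  have -> : (k%:Z + 1) ^+ p - (k%:Z + 1) =
            ((k%:Z + 1) ^+ p - k%:Z ^+ p - 1) + (k%:Z ^+ p - k%:Z) by ring.
  exact: dividesD.
case: c => [k|k]; first exact: fermat_nat.
rewrite NegzE; set a := (k.+1)%:Z.
have := divides_p_expD (- a) a p_pr; rewrite addNr expr0n gtn_eqF // sub0r => da.
have -> : (- a) ^+ p - (- a) = - (- ((- a) ^+ p) - a ^+ p) - (a ^+ p - a) by ring.
exact/dividesB/fermat_nat/dividesN.
Qed.

(* X_i |-> X_i^p is a lift of Frobenius on Z[X_0..X_(N-1)]:
   msig Q = Q^p mod p. *)
Definition msig N p : {rmorphism {mpoly int[N]} -> {mpoly int[N]}} :=
  mmap (@mpolyC N int) (fun i => 'X_i ^+ p).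

Lemma msig_frobenius N p : prime p ->
  forall Q : {mpoly int[N]}, divides (p%:R) (msig N p Q - Q ^+ p).
Proof.
move=> p_pr; have p_gt0 := prime_gt0 p_pr.
elim/mpolyind => [|c m Q _ _ IH].
  by rewrite rmorph0 expr0n gtn_eqF // subr0; apply: divides0.
have regroup (x y a b w : {mpoly int[N]}) :
  x + y - w = (x - a) + (y - b) - (w - a - b) by ring.
set M := c *: 'X_[m]; rewrite rmorphD (regroup _ _ (M ^+ p) (Q ^+ p)).
apply: dividesB; last exact: divides_p_expD.
apply: dividesD => //.
(* On a monomial, msig only raises the coefficient's p-th power defect. *)
rewrite /M /msig /= mmapZ mmapX -mul_mpolyC exprMn mpolyXE_id -prodrXl.
rewrite [mmap1 _ _](eq_bigr (fun i : 'I_N => ('X_i ^+ m i) ^+ p)); last first.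
  by move=> i _; rewrite exprAC.
rewrite -[_ c * _]/(c%:MP * _) -mulrBl; apply: dividesMr.
have [e he] := fermat_int c p_pr.
exists (- e%:MP); rewrite -rmorphXn -rmorphB /= -opprB he rmorphN rmorphM rmorph_nat.
by rewrite mulrN.
Qed.

Definition is_ghost (R : comPzRingType) p m (g : nat -> R) : Prop :=
  exists x, forall k, (k <= m)%N -> g k = ghost p k x.

Section Dwork.
Variables (R : comPzRingType) (p : nat) (sig : {rmorphism R -> R}).
Hypothesis p_pr : prime p.
Hypothesis sig_frob : forall Q, divides (p%:R) (sig Q - Q ^+ p).
Local Notation P := (p%:R : R).

Lemma sig_ghost (x : nat -> R) j : divides (P ^+ j.+1)
  (sig (ghost p j x) - \sum_(i < j.+1) P ^+ i * x i ^+ (p ^ (j.+1 - i))).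
Proof.
rewrite ghost_rmorph /ghost -sumrB; apply: divides_sum => i.
have le_ij : (i <= j)%N by rewrite -ltnS.
rewrite /= -mulrBr subSn // expnS exprM.
have := @divides_exppn R p 1 (j - i) (sig (x i)) (x i ^+ p) isT (prime_gt0 p_pr).
rewrite expr1 => /(_ (sig_frob _)) dsig.
rewrite (_ : P ^+ j.+1 = P ^+ i * P ^+ (1 + (j - i))).
  by apply: dividesMM dsig; exists 1; rewrite mulr1.
by rewrite -exprD add1n addnS subnKC.
Qed.

Definition dwork_seq m (u : nat -> R) : Prop :=
  forall k, (k < m)%N -> divides (P ^+ k.+1) (u k.+1 - sig (u k)).

Lemma ghost_dwork_seq m (x : nat -> R) : dwork_seq m (fun k => ghost p k x).
Proof.
move=> k _; rewrite ghostS addrAC -opprB.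
by apply/dividesD/divides_mulr/dividesN/sig_ghost.
Qed.

Lemma dwork_seqD m u v :
  dwork_seq m u -> dwork_seq m v -> dwork_seq m (fun k => u k + v k).
Proof.
move=> du dv k lt_km; rewrite rmorphD opprD addrACA.
by apply: dividesD; [apply: du | apply: dv].
Qed.

Lemma dwork_seqM m u v :
  dwork_seq m u -> dwork_seq m v -> dwork_seq m (fun k => u k * v k).
Proof.
move=> du dv k lt_km; rewrite rmorphM.
have -> : u k.+1 * v k.+1 - sig (u k) * sig (v k) =
  (u k.+1 - sig (u k)) * v k.+1 + sig (u k) * (v k.+1 - sig (v k)).
  by rewrite mulrBl mulrBr addrA subrK.
by apply: dividesD; [apply/dividesMr/du | apply/dividesMl/dv].
Qed.

Lemma dwork_seqN m u : dwork_seq m u -> dwork_seq m (fun k => - u k).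
Proof. by move=> du k lt_km; rewrite rmorphN -opprD; apply/dividesN/du. Qed.

(* Dwork's lemma: coordinates x_0, .., x_m are found one at a time, the
   congruence at step j making u_j - (w_j without its last term) divisible
   by p^j. *)
Lemma dwork m u : dwork_seq m u -> is_ghost p m u.
Proof.
move=> du; suff ghost_upto j : (j <= m)%N -> is_ghost p j u.
  by have [x ux] := ghost_upto m (leqnn m); exists x.
elim: j => [_|j IH lt_jm].
  by exists (fun _ => u 0%N) => k; rewrite leqn0 => /eqP ->; rewrite ghost0.
have [x ux] := IH (ltnW lt_jm).
pose w := \sum_(i < j.+1) P ^+ i * x i ^+ (p ^ (j.+1 - i)).
have [D uD] : divides (P ^+ j.+1) (u j.+1 - w).
  have -> : u j.+1 - w = (u j.+1 - sig (u j)) + (sig (ghost p j x) - w).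
    by rewrite (ux j (leqnn j)) addrA subrK.
  by apply: dividesD; [apply: du | apply: sig_ghost].
exists (fun i => if i == j.+1 then D else x i) => k.
rewrite leq_eqVlt => /orP [/eqP ->|lt_kj].
  rewrite ghostS eqxx -uD (eq_bigr (fun i : 'I_j.+1 => P ^+ i * x i ^+ (p ^ (j.+1 - i)))).
    by rewrite addrC subrK.
  by move=> i _; rewrite ifN // neq_ltn ltn_ord.
rewrite (ux k lt_kj); apply: ghost_ext => i le_ik; rewrite ifN //.
by rewrite neq_ltn (leq_ltn_trans le_ik lt_kj).
Qed.
End Dwork.

(** Ghost sequences are closed under the ring operations (this is the ring
    structure of Witt vectors).  Any two sequences over S are images of
    sequences of variables of some Z[X_0..X_(N-1)], where the lift of
    Frobenius [msig] makes Dwork's lemma available. *)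

Lemma is_ghost_ext (S : comPzRingType) p m (g g' : nat -> S) :
  (forall k, (k <= m)%N -> g k = g' k) -> is_ghost p m g -> is_ghost p m g'.
Proof. by move=> eqg [x gx]; exists x => k le_km; rewrite -eqg // gx. Qed.

Lemma is_ghost_rmorph (R S : comPzRingType) (ev : {rmorphism R -> S}) p m
    (u : nat -> R) :
  is_ghost p m u -> is_ghost p m (ev \o u).
Proof. by move=> [x ux]; exists (ev \o x) => k le_km; rewrite /= ux // ghost_rmorph. Qed.

Lemma universal_pair (S : comNzRingType) m (x y : nat -> S) :
  exists N (X Y : nat -> {mpoly int[N]}) (ev : {rmorphism {mpoly int[N]} -> S}),
    (forall i, (i <= m)%N -> ev (X i) = x i) /\
    (forall i, (i <= m)%N -> ev (Y i) = y i).
Proof.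
pose N := (m + m).+2.
pose h (o : 'I_N) := if (o <= m)%N then x o else y (o - m.+1)%N.
exists N, (fun i => 'X_(inord i)), (fun i => 'X_(inord (m.+1 + i))), (mmap intr h).
split=> i le_im /=; rewrite mmapX mmap1U /h inordK ?addKn ?le_im //; try lia.
by rewrite ifN //; apply/negP; lia.
Qed.

Lemma ghost_eval (R S : comPzRingType) (ev : {rmorphism R -> S}) p m
    (X : nat -> R) (x : nat -> S) k :
  (forall i, (i <= m)%N -> ev (X i) = x i) -> (k <= m)%N ->
  ev (ghost p k X) = ghost p k x.
Proof.
move=> evX le_km; rewrite ghost_rmorph; apply: ghost_ext => i le_ik /=.
by apply: evX; apply: leq_trans le_km.
Qed.

Section GhostRing.
Variables (S : comNzRingType) (p : nat).
Hypothesis p_pr : prime p.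

Let mpoly_dwork N m (u : nat -> {mpoly int[N]}) :
  dwork_seq p (msig N p) m u -> is_ghost p m u.
Proof. exact/dwork/msig_frobenius. Qed.

Let ghost_seq_dwork N m (X : nat -> {mpoly int[N]}) :
  dwork_seq p (msig N p) m (fun k => ghost p k X).
Proof. exact/ghost_dwork_seq/msig_frobenius. Qed.

Lemma is_ghostD m (g g' : nat -> S) :
  is_ghost p m g -> is_ghost p m g' -> is_ghost p m (fun k => g k + g' k).
Proof.
move=> [x gx] [y gy]; have [N [X [Y [ev [evX evY]]]]] := universal_pair m x y.
have := is_ghost_rmorph ev (mpoly_dwork (dwork_seqD (ghost_seq_dwork (m := m) X)
                                                  (ghost_seq_dwork (m := m) Y))).
apply: is_ghost_ext => k le_km; rewrite (gx _ le_km) (gy _ le_km).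
by rewrite -(ghost_eval _ evX le_km) -(ghost_eval _ evY le_km) -rmorphD.
Qed.

Lemma is_ghostM m (g g' : nat -> S) :
  is_ghost p m g -> is_ghost p m g' -> is_ghost p m (fun k => g k * g' k).
Proof.
move=> [x gx] [y gy]; have [N [X [Y [ev [evX evY]]]]] := universal_pair m x y.
have := is_ghost_rmorph ev (mpoly_dwork (dwork_seqM (ghost_seq_dwork (m := m) X)
                                                  (ghost_seq_dwork (m := m) Y))).
apply: is_ghost_ext => k le_km; rewrite (gx _ le_km) (gy _ le_km).
by rewrite -(ghost_eval _ evX le_km) -(ghost_eval _ evY le_km) -rmorphM.
Qed.

Lemma is_ghostN m (g : nat -> S) : is_ghost p m g -> is_ghost p m (fun k => - g k).
Proof.
move=> [x gx]; have [N [X [_ [ev [evX _]]]]] := universal_pair m x x.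
have := is_ghost_rmorph ev (mpoly_dwork (dwork_seqN (ghost_seq_dwork (m := m) X))).
apply: is_ghost_ext => k le_km; rewrite (gx _ le_km).
by rewrite -(ghost_eval _ evX le_km) -rmorphN.
Qed.

Lemma is_ghostB m (g g' : nat -> S) :
  is_ghost p m g -> is_ghost p m g' -> is_ghost p m (fun k => g k - g' k).
Proof. by move=> gg gg'; apply/is_ghostD/is_ghostN. Qed.
End GhostRing.

Section FrobeniusImage.
Variables (S : comNzRingType) (p : nat).
Hypothesis p_pr : prime p.
Local Notation P := (p%:R : S).

(* g is the ghost sequence of F(a) for a Witt vector a of length m+2:
   g_k = h_(k+1) where h is a ghost sequence. *)
Definition frob_image m (g : nat -> S) : Prop :=
  exists h, is_ghost p m.+1 h /\ forall k, (k <= m)%N -> g k = h k.+1.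

Lemma frob_image_ext m (g g' : nat -> S) :
  (forall k, (k <= m)%N -> g k = g' k) -> frob_image m g -> frob_image m g'.
Proof. by move=> eqg [h [gh hg]]; exists h; split=> // k le_km; rewrite -eqg // hg. Qed.

Lemma frob_imageD m (g g' : nat -> S) :
  frob_image m g -> frob_image m g' -> frob_image m (fun k => g k + g' k).
Proof.
move=> [h [gh hg]] [h' [gh' hg']]; exists (fun k => h k + h' k).
by split=> [|k le_km]; [exact: is_ghostD | rewrite hg // hg'].
Qed.

Lemma frob_imageM m (g g' : nat -> S) :
  frob_image m g -> frob_image m g' -> frob_image m (fun k => g k * g' k).
Proof.
move=> [h [gh hg]] [h' [gh' hg']]; exists (fun k => h k * h' k).
by split=> [|k le_km]; [exact: is_ghostM | rewrite hg // hg'].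
Qed.

Lemma is_ghostV m j (c : S) : is_ghost p m (ghostV p j c).
Proof.
by exists (fun i => if i == j then c else 0) => k _; rewrite ghost_single ?prime_gt0.
Qed.

Lemma is_ghost_nat m n : is_ghost p m (fun _ => n%:R : S).
Proof.
elim: n => [|n IH]; first by exists (fun _ => 0) => k _; rewrite ghost_zero ?prime_gt0.
apply: is_ghost_ext (is_ghostD p_pr IH (is_ghostV m 0 1)) => k _.
by rewrite /ghostV ltn0 expr0 expr1n mul1r -natr1.
Qed.

(* F[b] = [b^p]: Teichmueller ghost sequences of p-th powers are F-images. *)
Lemma frob_image_teich m (b : S) : frob_image m (ghostV p 0 (b ^+ p)).
Proof.
exists (ghostV p 0 b); split=> [|k _]; first exact: is_ghostV.
by rewrite /ghostV !ltn0 !subn0 -exprM expnS.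
Qed.

(* F(V a) = p a. *)
Lemma frob_image_p m (g : nat -> S) : is_ghost p m g -> frob_image m (fun k => P * g k).
Proof.
move=> [x gx]; pose Vx i := if i is i'.+1 then x i' else 0.
exists (fun k => ghost p k Vx); split=> [|k le_km]; first by exists Vx.
rewrite gx // /ghost [RHS]big_ord_recl /= expr0n expn_eq0 (gtn_eqF (prime_gt0 p_pr)).
rewrite mulr0 add0r big_distrr; apply: eq_bigr => i _ /=.
by rewrite /bump /= add1n subSS exprS mulrA.
Qed.

(* The unit Witt vectors V^j[1] are F-images; for j = 0 this is F[1] = [1]. *)
Lemma frob_image_basis m :
  (forall j, (0 < j <= m)%N -> frob_image m (ghostV p j 1)) ->
  forall j, (j <= m)%N -> frob_image m (ghostV p j 1).
Proof.
move=> basis [_|j le_jm]; last exact: basis.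
by apply: frob_image_ext (frob_image_teich m 1) => k _; rewrite expr1n.
Qed.

Hypothesis frob_surj : frob_modp_surj S p.

Lemma frob_surj_iter r (c : S) : exists b e, c = b ^+ (p ^ r) + P * e.
Proof.
elim: r c => [|r IH] c; first by exists c, 0; rewrite mulr0 addr0 expn0 expr1.
have [b [e ->]] := IH c; have [b' [e' def_b]] := frob_surj b.
have [f def_f] : divides P (b ^+ (p ^ r) - (b' ^+ p) ^+ (p ^ r)).
  by apply: divides_subX; exists e'; rewrite def_b addrAC subrr add0r.
exists b', (f + e); rewrite expnS exprM mulrDr addrA -def_f.
by rewrite [_ + (_ - _)]addrC subrK.
Qed.

Hypothesis torsion_free : p_torsion_free S p.

Lemma torsion_free_exp j (d : S) : P ^+ j * d = 0 -> d = 0.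
Proof.
by elim: j d => [|j IH] d; rewrite ?expr0 ?mul1r // exprSr -mulrA => /IH/torsion_free.
Qed.

(* The ghost map is injective: the last term of w_(r+1) is p^(r+1) x_(r+1). *)
Lemma ghost_inj r (x y : nat -> S) :
  (forall k, (k <= r)%N -> ghost p k x = ghost p k y) ->
  forall i, (i <= r)%N -> x i = y i.
Proof.
elim: r => [|r IH] eqw i le_ir.
  by move: le_ir; rewrite leqn0 => /eqP ->; have := eqw 0%N isT; rewrite !ghost0.
have eqxy := IH (fun k le_kr => eqw k (leq_trans le_kr (leqnSn r))).
move: le_ir; rewrite leq_eqVlt => /orP [/eqP ->|]; last exact: eqxy.
have := eqw r.+1 (leqnn _); rewrite !ghostS.
rewrite (eq_bigr (fun l : 'I_r.+1 => P ^+ l * y l ^+ (p ^ (r.+1 - l)))); last first.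
  by move=> l _; rewrite eqxy // -ltnS.
move/addrI/eqP; rewrite -subr_eq0 -mulrBr => /eqP/torsion_free_exp/eqP.
by rewrite subr_eq0 => /eqP.
Qed.

Lemma ghost_low_zero m j (d : nat -> S) : is_ghost p m d ->
  (forall k, (k < j)%N -> d k = 0) -> (j <= m)%N -> exists c, d j = P ^+ j * c.
Proof.
move=> [x dx] d0 le_jm; exists (x j).
have x0 i : (i < j)%N -> x i = 0.
  move=> lt_ij; have j_gt0 := leq_ltn_trans (leq0n i) lt_ij.
  apply: (@ghost_inj j.-1 x (fun _ => 0)) => [k le_kj|]; last by rewrite -ltnS prednK.
  have lt_kj : (k < j)%N by rewrite -(prednK j_gt0) ltnS.
  by rewrite ghost_zero ?prime_gt0 // -dx ?d0 // (leq_trans (ltnW lt_kj)).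
rewrite dx //; case: j le_jm d0 x0 => [|j] _ _ x0; first by rewrite ghost0 expr0 mul1r.
rewrite ghostS big1 ?add0r // => i _.
by rewrite x0 // expr0n expn_eq0 (gtn_eqF (prime_gt0 p_pr)) mulr0.
Qed.

(* One approximation step: a ghost sequence d vanishing below j agrees up
   to j with F(V^j[1] [b^p] + V(V^j[e])), where d_j = p^j (b^(p^(j+1)) + p e). *)
Lemma approx_step m j (d : nat -> S) :
  (forall j, (0 < j <= m)%N -> frob_image m (ghostV p j 1)) ->
  is_ghost p m d -> (forall k, (k < j)%N -> d k = 0) -> (j <= m)%N ->
  exists s, [/\ frob_image m s, is_ghost p m s & forall k, (k <= j)%N -> s k = d k].
Proof.
move=> basis gd d0 le_jm; have [c dj] := ghost_low_zero gd d0 le_jm.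
have [b [e def_c]] := frob_surj_iter j.+1 c.
exists (fun k => ghostV p j 1 k * ghostV p 0 (b ^+ p) k + P * ghostV p j e k); split.
- apply: frob_imageD; last exact/frob_image_p/is_ghostV.
  exact: frob_imageM (frob_image_basis basis le_jm) (frob_image_teich m b).
- apply: (is_ghostD p_pr); apply: (is_ghostM p_pr);
    by [exact: is_ghostV | exact: is_ghost_nat].
- move=> k; rewrite leq_eqVlt => /orP [/eqP ->|lt_kj]; last first.
    by rewrite d0 // /ghostV lt_kj mul0r mulr0 addr0.
  rewrite dj def_c /ghostV ltnn ltn0 subnn subn0 expn0 !expr1 expr0 -exprM -expnS.
  ring.
Qed.

Lemma frob_image_all m (g : nat -> S) :
  (forall j, (0 < j <= m)%N -> frob_image m (ghostV p j 1)) ->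
  is_ghost p m g -> frob_image m g.
Proof.
move=> basis gg.
suff approx j : (j <= m.+1)%N -> exists i,
    [/\ frob_image m i, is_ghost p m i & forall k, (k < j)%N -> g k = i k].
  have [i [im _ gi]] := approx m.+1 (leqnn _).
  by apply: frob_image_ext im => k le_km; rewrite gi.
elim: j => [_|j IH lt_jm].
  exists (fun _ => 0); split=> //; last exact: is_ghost_nat m 0.
  by apply: frob_image_ext (frob_image_p (is_ghost_nat m 0)) => k _; rewrite mulr0.
have [i [im gi eqgi]] := IH (ltnW lt_jm).
have low0 k : (k < j)%N -> g k - i k = 0 by move=> /eqgi ->; rewrite subrr.
have [s [sm gs eqs]] := approx_step basis (is_ghostB p_pr gg gi) low0 lt_jm.
exists (fun k => i k + s k); split; [exact: frob_imageD | exact: is_ghostD |].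
by move=> k; rewrite ltnS => le_kj; rewrite eqs // addrC subrK.
Qed.
End FrobeniusImage.

Definition unit_vectors_in_image (S : comPzRingType) n (phi : nat -> zterm) :=
  forall j, (0 < j < n)%N ->
    exists a : nat -> S, forall i, (i < n)%N -> zeval a (phi i) = (i == j)%:R.

Section WittFrobenius.
Variables (S : comNzRingType) (p : nat).
Hypothesis p_pr : prime p.

Lemma frob_image_zeval m phi (a : nat -> S) : FrobPolys p m.+1 phi ->
  frob_image p m (fun k => ghost p k (fun i => zeval a (phi i))).
Proof.
move=> phiF; exists (fun k => ghost p k a); split=> [|k le_km]; first by exists a.
exact: frobpolys_ghost phiF a k le_km.
Qed.

Lemma witt_frob_surj m phi :
  p_torsion_free S p -> frob_modp_surj S p -> FrobPolys p m.+1 phi ->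
  unit_vectors_in_image S m.+1 phi ->
  forall y : 'I_m.+1 -> S, exists a : 'I_m.+2 -> S,
    forall i : 'I_m.+1, zeval (wext a) (phi i) = y i.
Proof.
move=> torsion_free frob_surj phiF units y.
have basis j : (0 < j <= m)%N -> frob_image p m (ghostV p j (1 : S)).
  move=> lt0jm; have [a ea] := units j lt0jm.
  apply: frob_image_ext (frob_image_zeval a phiF) => k le_km.
  rewrite -ghost_single ?prime_gt0 //; apply: ghost_ext => i le_ik.
  by rewrite ea ?ltnS ?(leq_trans le_ik) //; case: eqP.
have gy : is_ghost p m (fun k => ghost p k (wext y)) by exists (wext y).
have [h [[x hx] yh]] := frob_image_all p_pr frob_surj torsion_free basis gy.
exists (fun o : 'I_m.+2 => x o).
have wext_x j : (j <= m.+1)%N -> wext (fun o : 'I_m.+2 => x o) j = x j.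
  by move=> le_jm; rewrite /wext ltnS le_jm inordK.
suff eq_ghost k : (k <= m)%N -> zeval (wext (fun o : 'I_m.+2 => x o)) (phi k) = wext y k.
  by move=> i; rewrite (eq_ghost i (ltn_ord i)) /wext ltn_ord inord_val.
apply: (ghost_inj torsion_free
  (x := fun i => zeval (wext (fun o : 'I_m.+2 => x o)) (phi i))) => {}k le_km.
rewrite (frobpolys_ghost phiF _ le_km) (@ghost_ext _ p k.+1 _ x) => [|l le_lk].
  by rewrite -(hx k.+1 le_km) -(yh _ le_km).
by rewrite wext_x // (leq_trans le_lk).
Qed.

(* Witt-perfect rings have surjective Frobenius mod p:
   w_0(F a) = w_1(a) = a_0^p + p a_1. *)
Lemma frob_surj_of_witt_perfect : WittPerfect S p -> frob_modp_surj S p.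
Proof.
move=> witt b; have [phi [phiF surj]] := witt 2%N (leqnn 2).
have [a ea] := surj (fun _ => b).
have := frobpolys_ghost phiF (wext a) (k := 0) isT.
rewrite ghost0 (ea ord0) ghostS big_ord1 expr0 mul1r subn0 expn1 expr1 => ->.
by exists (wext a 0%N), (wext a 1%N).
Qed.

Lemma witt_perfect_iff :
  p_torsion_free S p ->
  (forall n, (2 <= n)%N ->
     exists phi, FrobPolys p n phi /\ unit_vectors_in_image S n phi) ->
  WittPerfect S p <-> frob_modp_surj S p.
Proof.
move=> torsion_free units; split; first exact: frob_surj_of_witt_perfect.
move=> frob_surj [//|m] le2m; have [phi [phiF unitsF]] := units m.+1 le2m.
by exists phi; split=> //; apply: witt_frob_surj.
Qed.
End WittFrobenius.

(** The zero ring is trivially Witt-perfect; a nonzero ring is repackaged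
    as a [comNzRingType], as required by the polynomial library. *)

Lemma zero_ring_witt (B : comPzRingType) p : (1 : B) = 0 ->
  (forall n, (2 <= n)%N -> exists phi, FrobPolys p n phi) ->
  WittPerfect B p /\ frob_modp_surj B p.
Proof.
move=> one0 frob_polys; have all0 (b : B) : b = 0 by rewrite -[b]mulr1 one0 mulr0.
split=> [n le2n|b]; last by exists 0, 0; rewrite (all0 b) [RHS]all0.
have [phi phiF] := frob_polys n le2n; exists phi; split=> // y.
by exists (fun _ => 0) => i; rewrite (all0 (zeval _ _)) [RHS]all0.
Qed.

Definition nonzero_ring (B : comPzRingType) (nzB : (1 : B) != 0) : Type := B.
HB.instance Definition _ (B : comPzRingType) (nzB : (1 : B) != 0) :=
  GRing.ComPzRing.on (nonzero_ring nzB).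
HB.instance Definition _ (B : comPzRingType) (nzB : (1 : B) != 0) :=
  GRing.PzSemiRing_isNonZero.Build (nonzero_ring nzB) nzB.

Section NonzeroRing.
Variables (B : comPzRingType) (nzB : (1 : B) != 0) (p : nat).
Local Notation B' := (nonzero_ring nzB).

Lemma zeval_nonzero_ring (x : nat -> B) t : @zeval B x t = @zeval B' x t.
Proof. by elim: t => //= [t1 -> t2 ->|t1 -> t2 ->|t1 ->]. Qed.

Lemma witt_perfect_nonzero_ring : WittPerfect B' p <-> WittPerfect B p.
Proof.
split=> witt n le2n; have [phi [phiF surj]] := witt n le2n; exists phi.
all: split=> // y; have [a ea] := surj y; exists a => i.
  by rewrite zeval_nonzero_ring.
by rewrite -zeval_nonzero_ring.
Qed.
End NonzeroRing.

Theorem mainTheorem3 (p : nat) (A B : comPzRingType) (f : {rmorphism A -> B}) :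
  prime p -> WittPerfect A p -> p_torsion_free B p ->
  (WittPerfect B p <-> frob_modp_surj B p).
Proof.
move=> p_pr wittA torsion_free.
have [one0|nzB] := eqVneq (1 : B) 0.
  have frob_polys n : (2 <= n)%N -> exists phi, FrobPolys p n phi.
    by move=> /wittA [phi [phiF _]]; exists phi.
  by have [wittB frobB] := zero_ring_witt one0 frob_polys; split.
rewrite -(witt_perfect_nonzero_ring nzB).
apply: (witt_perfect_iff (S := nonzero_ring nzB) p_pr torsion_free) => n le2n.
(* The Witt-Frobenius polynomials of A serve for B; the unit vectors are
   images under f of preimages of unit vectors in W(A). *)
have [phi [phiF surjA]] := wittA n le2n; exists phi; split=> // j /andP [_ lt_jn].
have [a ea] := surjA (fun i : 'I_n => (i == j :> nat)%:R).
exists (f \o wext a) => i lt_in.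
by rewrite -zeval_nonzero_ring -zeval_rmorph (ea (Ordinal lt_in)) rmorph_nat.
Qed.
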